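(* Let $\nu\in(0,\infty)$ and $x\in\mathbb X$. The following are equivalent: (i) there is $c_1>0$ with $\gamma_x(r)\le c_1r^{-\nu}$ for all $r>0$; (ii) there is $c_2>0$ with $\|Ax-Ax_\alpha\|_{\mathbb Y}\le c_2\alpha^{\frac\nu{1+\nu}}$ for all $\alpha>0$ and all $x_\alpha\in R_\alpha(Ax)$. More precisely, (i) implies (ii) with $c_2=4c_1^{\frac1{1+\nu}}$, and (ii) implies (i) with $c_1=c_2^{1+\nu}$.
   Context: Standing setting: $\mathbb X$ real Banach space, $\tau$ a topology with $(\mathbb X,\tau)$ locally convex Hausdorff; $\mathcal R:\mathbb X\to(-\infty,\infty]$ proper convex with $\tau$-compact sublevel sets; $\mathbb Y$ real Hilbert space; $A:\mathbb X\to\mathbb Y$ linear, $\tau$-to-weak continuous. $R_\alpha(g):=\operatorname{argmin}_{x\in\mathrm{dom}(\mathcal R)}(\frac1{2\alpha}\|g-Ax\|_{\mathbb Y}^2+\mathcal R(x))$, $\varrho_1(z):=\sup\{\beta^{-1}\|Az-Az_\beta\|_{\mathbb Y}:\beta>0,z_\beta\in R_\beta(Az)\}$. For $r\ge0$, $B_r:=\{z\in\mathbb X:\varrho_1(z)\le r\}$ and $\gamma_x(r):=\inf_{z\in B_r}\|Ax-Az\|_{\mathbb Y}$. *)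

From HB Require Import structures.
From mathcomp Require Import all_boot all_order all_algebra.
From mathcomp Require Import all_classical all_reals all_analysis.
Set Implicit Arguments. Unset Strict Implicit. Unset Printing Implicit Defensive.
Import Order.TTheory GRing.Theory Num.Theory.
Import numFieldNormedType.Exports.
Local Open Scope classical_set_scope.
Local Open Scope ring_scope.

(* [ip] is an inner product on the normed space [Y] inducing its norm;
   together with completeness of Y this makes Y a real Hilbert space. *)
Definition is_inner_product (R : realType) (Y : normedModType R)
    (ip : Y -> Y -> R) : Prop :=
  (forall y z, ip y z = ip z y) /\
  (forall (a : R) (y y' z : Y), ip (a *: y + y') z = a * ip y z + ip y' z) /\
  (forall y, ip y y = `|y| ^+ 2).

Definition proper_fun (R : realType) (X : Type) (F : X -> \bar R) : Prop :=
  (forall x, F x != -oo%E) /\ (exists x, (F x < +oo)%E).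

Definition convex_fun (R : realType) (X : lmodType R) (F : X -> \bar R) : Prop :=
  forall (x y : X) (t : R), 0 < t < 1 ->
    (F (t *: x + (1 - t) *: y)%R <= t%:E * F x + (1 - t)%:E * F y)%E.

Definition dom_fun (R : realType) (X : Type) (F : X -> \bar R) : set X :=
  [set x | (F x < +oo)%E].

Definition tikh (R : realType) (X Y : normedModType R) (A : X -> Y)
    (Reg : X -> \bar R) (alpha : R) (g : Y) (x : X) : \bar R :=
  (((2 * alpha)^-1 * `|g - A x| ^+ 2)%:E + Reg x)%E.

Definition Ralpha (R : realType) (X Y : normedModType R) (A : X -> Y)
    (Reg : X -> \bar R) (alpha : R) (g : Y) : set X :=
  [set x | dom_fun Reg x /\
     forall z, dom_fun Reg z -> (tikh A Reg alpha g x <= tikh A Reg alpha g z)%E].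

Definition varrho1 (R : realType) (X Y : normedModType R) (A : X -> Y)
    (Reg : X -> \bar R) (z : X) : \bar R :=
  ereal_sup [set e : \bar R | exists (beta : R) (zb : X),
     0 < beta /\ Ralpha A Reg beta (A z) zb /\
     e = (beta^-1 * `|A z - A zb|)%:E].

Definition Bset (R : realType) (X Y : normedModType R) (A : X -> Y)
    (Reg : X -> \bar R) (r : R) : set X :=
  [set z | (varrho1 A Reg z <= r%:E)%E].

(* gamma_x(r) = inf_{z in B_r} |A x - A z|  (inf of the empty set = +oo) *)
Definition gammax (R : realType) (X Y : normedModType R) (A : X -> Y)
    (Reg : X -> \bar R) (x : X) (r : R) : \bar R :=
  ereal_inf [set (`|A x - A z|)%:E | z in Bset A Reg r].

(* The proof rests on two estimates for minimisers [xa] of [A x]: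
   - [xa] itself lies in [B_r] for [r = |A x - A xa| / alpha]
     ([varrho1_le], from the stability estimate [tikh_stability]), which
     gives (ii) => (i);
   - [|A x - A xa| <= gamma_x(r) + 2 alpha r] ([residual_le_gammax],
     comparing [xa] with minimisers of [A z] for [z] in [B_r]), which gives
     (i) => (ii).
   Both rely on the variational inequality for minimisers
   ([tikh_variational]) and on the existence of minimisers, obtained by a
   Weierstrass argument for lower semicontinuous functions on the
   tau-compact sublevel sets ([tikh_minimizer_exists]).  Choosing [alpha]
   and [r] with [alpha r^(1+nu) = c] balances both sides ([balance]). *)

From HB Require Import structures.
From mathcomp Require Import all_boot all_order all_algebra.
From mathcomp Require Import all_classical all_reals all_analysis.
From mathcomp Require Import ring lra.
Set Implicit Arguments. Unset Strict Implicit.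
Import Order.TTheory GRing.Theory Num.Theory.
Import numFieldNormedType.Exports.
Local Open Scope classical_set_scope.
Local Open Scope ring_scope.

Section InnerProduct.
Variables (R : realType) (Y : normedModType R) (ip : Y -> Y -> R).
Hypothesis hip : is_inner_product ip.

Let ipC y z : ip y z = ip z y. Proof. by case: hip. Qed.
Let ipL a y y' z : ip (a *: y + y') z = a * ip y z + ip y' z.
Proof. by case: hip => _ []. Qed.

Lemma ipnn y : ip y y = `|y| ^+ 2. Proof. by case: hip => _ []. Qed.

Lemma ip0l z : ip 0 z = 0.
Proof. by have := ipL 1 0 0 z; rewrite scale1r addr0 mul1r => h; lra. Qed.

Lemma ipZl a y z : ip (a *: y) z = a * ip y z.
Proof. by have := ipL a y 0 z; rewrite addr0 ip0l addr0. Qed.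

Lemma ipBl y y' z : ip (y - y') z = ip y z - ip y' z.
Proof.
by have := ipL (-1) y' y z; rewrite scaleN1r mulN1r (addrC (- y')) (addrC (- _)).
Qed.

Lemma ipZr a y z : ip y (a *: z) = a * ip y z.
Proof. by rewrite ipC ipZl ipC. Qed.

Lemma ipBr y z z' : ip y (z - z') = ip y z - ip y z'.
Proof. by rewrite ipC ipBl !(ipC y). Qed.

Lemma ipNr y z : ip y (- z) = - ip y z.
Proof. by rewrite -scaleN1r ipZr mulN1r. Qed.

Lemma normB2 y z : `|y - z| ^+ 2 = `|y| ^+ 2 - 2 * ip y z + `|z| ^+ 2.
Proof. by rewrite -!ipnn ipBl !ipBr (ipC z y); lra. Qed.

Lemma ip_le_sqr y z : 2 * ip y z <= `|y| ^+ 2 + `|z| ^+ 2.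
Proof. by have := normB2 y z; have := sqr_ge0 `|y - z|; lra. Qed.

(* Cauchy-Schwarz, from [ip_le_sqr] applied to normalised vectors. *)
Lemma ip_le_norm y z : ip y z <= `|y| * `|z|.
Proof.
have [->|y0] := eqVneq y 0; first by rewrite ip0l normr0 mul0r.
have [->|z0] := eqVneq z 0; first by rewrite ipC ip0l normr0 mulr0.
have ny : 0 < `|y| by rewrite normr_gt0.
have nz : 0 < `|z| by rewrite normr_gt0.
have := ip_le_sqr (`|y|^-1 *: y) (`|z|^-1 *: z).
rewrite ipZl ipZr !normrZ !normfV !normr_id !mulVf ?gt_eqF // expr1n => h.
have -> : ip y z = (`|y| * `|z|) * (`|y|^-1 * (`|z|^-1 * ip y z)).
  by field; rewrite !gt_eqF.
by have := mulr_gt0 ny nz; nra.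
Qed.

End InnerProduct.

Lemma le0_of_le_small (R : realType) (D K : R) : 0 <= K ->
  (forall t, 0 < t < 1 -> D <= t * K) -> D <= 0.
Proof.
move=> K0 h; rewrite leNgt; apply/negP => D0.
pose t := D / (2 * (D + K)).
have DK : 0 < D + K by lra.
have tDK : t * (2 * (D + K)) = D by rewrite /t; field; rewrite gt_eqF.
have t0 : 0 < t by rewrite /t divr_gt0 // mulr_gt0.
have t1 : t < 1.
  by rewrite -(ltr_pM2r (_ : 0 < 2 * (D + K))) ?mulr_gt0 // tDK mul1r; lra.
have := h t; rewrite t0 t1 => /(_ isT) hD.
have : 0 < t * D by apply: mulr_gt0.
nra.
Qed.

(* Elementary consequence of [(a - s)^2 <= (d + s)^2]. *)
Lemma le_of_sqr_le (R : realType) (a d s : R) : 0 <= a -> 0 <= d -> 0 <= s ->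
  a ^+ 2 <= d ^+ 2 + 2 * s * (d + a) -> a <= d + 2 * s.
Proof. by move=> a0 d0 s0 h; nra. Qed.

Section TikhonovMinimizers.
Variables (R : realType) (X Y : normedModType R) (ip : Y -> Y -> R).
Variables (A : {linear X -> Y}) (Reg : X -> \bar R).
Hypotheses (hip : is_inner_product ip) (hRprop : proper_fun Reg).
Hypothesis hRconv : convex_fun Reg.

Lemma dom_fin x : dom_fun Reg x -> exists r : R, Reg x = r%:E.
Proof.
case: hRprop => /(_ x) + _; rewrite /dom_fun /=.
by case: (Reg x) => [r| |] //= _ _; exists r.
Qed.

Lemma tikh_compare alpha g xa w rx rw : 0 < alpha ->
  Ralpha A Reg alpha g xa -> Reg xa = rx%:E -> (Reg w <= rw%:E)%E ->
  `|g - A xa| ^+ 2 <= `|g - A w| ^+ 2 + 2 * alpha * (rw - rx).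
Proof.
move=> a0 [_ hmin] Rxa Rw.
have dw : dom_fun Reg w by exact: le_lt_trans Rw (ltry _).
have := le_trans (hmin w dw) (leeD2l _ Rw); rewrite /tikh Rxa -!EFinD lee_fin.
have k0 : 0 < (2 * alpha)^-1 by rewrite invr_gt0 mulr_gt0.
move=> h; rewrite -(ler_pM2l k0) mulrDr (mulrA (2 * alpha)^-1 (2 * alpha)).
rewrite mulVf ?gt_eqF ?mulr_gt0 // mul1r.
by lra.
Qed.

Lemma residual_comb (g : Y) (w xa : X) (t : R) :
  g - A (t *: w + (1 - t) *: xa) = (g - A xa) - t *: (A w - A xa).
Proof.
rewrite linearD !linearZ /= scalerBl scale1r scalerN scalerBr opprB.
rewrite opprD opprB addrA (addrC (t *: A xa)) !addrA [RHS]addrAC.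
by congr (_ + _); rewrite addrAC.
Qed.

Lemma tikh_variational alpha g xa w rx rw : 0 < alpha ->
  Ralpha A Reg alpha g xa -> Reg xa = rx%:E -> Reg w = rw%:E ->
  ip (g - A xa) (A w - A xa) <= alpha * (rw - rx).
Proof.
move=> a0 hxa Rxa Rw; rewrite -subr_le0.
apply: (@le0_of_le_small _ _ (`|A w - A xa| ^+ 2 / 2)).
  by rewrite divr_ge0 ?sqr_ge0.
move=> t /andP[t0 t1].
have Rwt : (Reg (t *: w + (1 - t) *: xa)%R <= (t * rw + (1 - t) * rx)%R%:E)%E.
  by have := @hRconv w xa t; rewrite t0 t1 Rw Rxa -!EFinM -EFinD; apply.
have := tikh_compare a0 hxa Rxa Rwt.
rewrite residual_comb (normB2 hip (g - A xa)) (ipZr hip) normrZ (ger0_norm (ltW t0)).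
move=> h; set I := ip _ _ in h *; set B := `|A w - A xa| in h *.
have : t * (I - alpha * (rw - rx)) <= t * (t * (B ^+ 2 / 2)) by nra.
by rewrite ler_pM2l.
Qed.

Lemma tikh_stability alpha beta g xa zb : 0 < alpha -> 0 < beta ->
  Ralpha A Reg alpha g xa -> Ralpha A Reg beta (A xa) zb ->
  alpha * `|A xa - A zb| <= beta * `|g - A xa|.
Proof.
move=> a0 b0 hxa hzb.
have [rx Rx] := dom_fin hxa.1; have [rz Rz] := dom_fin hzb.1.
have h1 := tikh_variational a0 hxa Rx Rz.
have h2 := tikh_variational b0 hzb Rz Rx.
rewrite (ipnn hip) in h2.
rewrite -(opprB (A xa) (A zb)) (ipNr hip) in h1.
have h3 := ip_le_norm hip (g - A xa) (A xa - A zb).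
set I := ip _ _ in h1 h3; set d := `|A xa - A zb| in h2 h3 *.
set w := `|g - A xa| in h3 *.
have d0 : 0 <= d by exact: normr_ge0.
have w0 : 0 <= w by exact: normr_ge0.
(* alpha d^2 <= beta I <= beta w d, then divide by d *)
have h4 : alpha * d ^+ 2 <= beta * (w * d) by nra.
have [->|d_neq0] := eqVneq d 0; first by rewrite mulr0 mulr_ge0 // ltW.
have dpos : 0 < d by rewrite lt_neqAle eq_sym d_neq0.
by nra.
Qed.

Lemma varrho1_le alpha g xa : 0 < alpha -> Ralpha A Reg alpha g xa ->
  (varrho1 A Reg xa <= (alpha^-1 * `|g - A xa|)%:E)%E.
Proof.
move=> a0 hxa; apply: ge_ereal_sup => _ [beta [zb [b0 [hzb ->]]]].
rewrite lee_fin -(ler_pM2l (mulr_gt0 a0 b0)).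
have -> : alpha * beta * (beta^-1 * `|A xa - A zb|) = alpha * `|A xa - A zb|.
  by field; rewrite gt_eqF.
have -> : alpha * beta * (alpha^-1 * `|g - A xa|) = beta * `|g - A xa|.
  by field; rewrite gt_eqF.
exact: tikh_stability.
Qed.

Lemma Bset_bounds r beta z zb rz rw w : 0 < beta -> Bset A Reg r z ->
  Ralpha A Reg beta (A z) zb -> Reg zb = rz%:E -> Reg w = rw%:E ->
  `|A z - A zb| <= beta * r /\ rz - rw <= r * `|A zb - A w|.
Proof.
move=> b0 hz hzb Rz Rw.
have hd : `|A z - A zb| <= beta * r.
  have : ((beta^-1 * `|A z - A zb|)%:E <= r%:E)%E.
    by apply: le_trans hz; apply: ereal_sup_ubound; exists beta, zb.
  by rewrite lee_fin -(ler_pM2l b0) mulrA mulfV ?gt_eqF // mul1r.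
split => //.
have h1 := tikh_variational b0 hzb Rz Rw.
rewrite -(opprB (A zb) (A w)) (ipNr hip) in h1.
have h2 := ip_le_norm hip (A z - A zb) (A zb - A w).
have h3 : `|A z - A zb| * `|A zb - A w| <= beta * r * `|A zb - A w|.
  by rewrite ler_wpM2r.
have : beta * (rz - rw) <= beta * (r * `|A zb - A w|) by lra.
by rewrite ler_pM2l.
Qed.

Lemma residual_le_Bset alpha beta r g xa z zb : 0 < alpha -> 0 < beta ->
  0 <= r -> Ralpha A Reg alpha g xa -> Bset A Reg r z ->
  Ralpha A Reg beta (A z) zb ->
  `|g - A xa| <= `|g - A z| + beta * r + 2 * (alpha * r).
Proof.
move=> a0 b0 r0 hxa hz hzb.
have [rx Rx] := dom_fin hxa.1; have [rz Rz] := dom_fin hzb.1.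
have [hd hreg] := Bset_bounds b0 hz hzb Rz Rx.
have Rz_le : (Reg zb <= rz%:E)%E by rewrite Rz.
have hcmp := tikh_compare a0 hxa Rx Rz_le.
have tri1 : `|A zb - A xa| <= `|g - A zb| + `|g - A xa|.
  by rewrite (distrC g (A zb)) ler_distD.
have tri2 : `|g - A zb| <= `|g - A z| + `|A z - A zb|.
  exact: ler_distD.
have : `|g - A xa| <= `|g - A zb| + 2 * (alpha * r).
  apply: le_of_sqr_le => //; first by rewrite mulr_ge0 // ltW.
  apply: (le_trans hcmp); rewrite lerD2l -!mulrA !ler_pM2l //.
  by apply: le_trans hreg _; rewrite ler_wpM2l.
by lra.
Qed.

Lemma gammax_le_residual x alpha r xa : 0 < alpha ->
  Ralpha A Reg alpha (A x) xa -> alpha^-1 * `|A x - A xa| <= r ->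
  (gammax A Reg x r <= (`|A x - A xa|)%:E)%E.
Proof.
move=> a0 hxa hr; apply: ge_ereal_inf; exists (`|A x - A xa|)%:E => //.
by exists xa => //; apply: le_trans (varrho1_le a0 hxa) _; rewrite lee_fin.
Qed.

End TikhonovMinimizers.

Section LowerSemicontinuity.
Variables (T : topologicalType) (R : realType).
Implicit Types (f : T -> \bar R) (phi : T -> R).

Lemma lsc_closed_sublevel f :
  lower_semicontinuous f <-> forall c : R, closed [set u | (f u <= c%:E)%E].
Proof.
have compl c : [set u | (f u <= c%:E)%E] = ~` [set u | (c%:E < f u)%E].
  by apply/seteqP; split => u /=; rewrite leNgt => /negP.
rewrite lower_semicontinuousP; split => h c.
  by rewrite compl; exact: open_closedC.
by rewrite -[X in open X]setCK -compl; exact: closed_openC.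
Qed.

Lemma lsc_scale phi (k : R) : 0 < k ->
  lower_semicontinuous (fun u => (phi u)%:E) ->
  lower_semicontinuous (fun u => (k * phi u)%:E).
Proof.
move=> k0 hphi p a; rewrite lte_fin -ltr_pdivrMl // => ha.
have [V Vp hV] := hphi p (k^-1 * a) ha.
by exists V => // u /hV; rewrite !lte_fin ltr_pdivrMl.
Qed.

Lemma lscD phi f : (forall u, f u != -oo%E) ->
  lower_semicontinuous (fun u => (phi u)%:E) -> lower_semicontinuous f ->
  lower_semicontinuous (fun u => ((phi u)%:E + f u)%E).
Proof.
move=> fNy hphi hf p a ha.
have [b bf phib] : exists2 b : R, (b%:E < f p)%E & a - b < phi p.
  move: ha (fNy p); case: (f p) => [r| |] //= ha _.
    rewrite -EFinD lte_fin in ha.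
    by exists (r - (phi p + r - a) / 2); rewrite ?lte_fin; lra.
  by exists (a - phi p + 1); [exact: ltry | lra].
have [V Vp hV] := hphi p (a - b) phib.
have [W Wp hW] := hf p b bf.
exists (V `&` W); first exact: filterI.
move=> u [/hV + /hW]; rewrite lte_fin; case: (f u) => [r| |] //= h1 h2.
  by rewrite -EFinD lte_fin; rewrite lte_fin in h2; lra.
by rewrite addey // ltry.
Qed.

(* A cluster point [p] of the filter
   generated by the nonempty sublevel sets lies in each of them, since they
   are closed. *)
Lemma lsc_attains_min f (c : R) : lower_semicontinuous f ->
  compact [set u | (f u <= c%:E)%E] -> [set u | (f u <= c%:E)%E] !=set0 ->
  exists p, forall u, (f p <= f u)%E.
Proof.
move=> hf hK hne.
have cl := (lsc_closed_sublevel f).1 hf.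
pose D := [set d : R | [set u | (f u <= d%:E)%E] !=set0].
pose B d := [set u | (f u <= d%:E)%E].
have PF : ProperFilter (filter_from D B).
  apply: filter_from_proper => //; apply: filter_from_filter; first by exists c.
  move=> d e Dd De; have [de|ed] := leP d e.
    by exists d => // u /= hu; split => //; apply: le_trans hu _; rewrite lee_fin.
  by exists e => // u /= hu; split => //; apply: le_trans hu _; rewrite lee_fin ltW.
have [p [_ clp]] := hK _ PF (ex_intro2 _ _ c hne (@subset_refl _ (B c))).
have lowb d : D d -> (f p <= d%:E)%E.
  move=> Dd; apply: (cl d) => N Np.
  exact: clp (B d) N (ex_intro2 _ _ d Dd (@subset_refl _ (B d))) Np.
exists p => u; case Eu: (f u) => [r| |].
- by apply: lowb; exists u; rewrite /= Eu.
- exact: leey.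
- suff -> : f p = -oo%E by [].
  by apply: eq_ninfty => r; apply: lowb; exists u; rewrite /= Eu leNye.
Qed.

End LowerSemicontinuity.

Section Existence.
Variables (R : realType) (X : normedModType R) (Xt : tvsType R) (j : Xt -> X).
Variables (Reg : X -> \bar R) (Y : normedModType R) (ip : Y -> Y -> R).
Variable A : {linear X -> Y}.
Hypotheses (hXt : hausdorff_space Xt) (hj : bijective j).
Hypotheses (hip : is_inner_product ip) (hRprop : proper_fun Reg).
Hypothesis hRconv : convex_fun Reg.
Hypothesis hRcomp : forall c : R, compact (j @^-1` [set x | (Reg x <= c%:E)%E]).
Hypothesis hAcont : forall y : Y, continuous (fun u : Xt => ip (A (j u)) y).

(* Weak lower semicontinuity of the squared residual: it dominates the
   continuous affine minorant [2 <g - A (j u), y> - |y|^2], with equality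
   at [u = p] for [y = g - A (j p)]. *)
Lemma residual_lsc g :
  lower_semicontinuous (fun u : Xt => (`|g - A (j u)| ^+ 2)%:E).
Proof.
move=> p t; rewrite lte_fin => ht.
set y := g - A (j p).
set a := ip g y - (t + `|y| ^+ 2) / 2.
have hp : ip (A (j p)) y < a.
  have : ip y y = ip g y - ip (A (j p)) y by rewrite {1}/y (ipBl hip).
  by rewrite (ipnn hip) /a; lra.
exists [set u | ip (A (j u)) y < a]; first exact: hAcont y p _ (lt_nbhsl hp).
move=> u /= hu; rewrite lte_fin.
by have := ip_le_sqr hip (g - A (j u)) y; rewrite (ipBl hip) /a in hu *; lra.
Qed.

(* [Reg] is tau-lower semicontinuous: its sublevel sets are tau-compact, hence
   tau-closed in the Hausdorff space [(X, tau)]. *)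
Lemma reg_lsc : lower_semicontinuous (fun u : Xt => Reg (j u)).
Proof.
apply/lsc_closed_sublevel => c; exact: compact_closed hXt (@hRcomp c).
Qed.

Lemma tikh_lsc alpha g : 0 < alpha ->
  lower_semicontinuous (fun u : Xt => tikh A Reg alpha g (j u)).
Proof.
move=> a0; apply: lscD; first by move=> u; case: hRprop.
  by apply: lsc_scale; [rewrite invr_gt0 mulr_gt0 | exact: residual_lsc].
exact: reg_lsc.
Qed.

Lemma tikh_minimizer_exists alpha g : 0 < alpha ->
  exists xa, Ralpha A Reg alpha g xa.
Proof.
move=> a0; have [jinv jK Kj] := hj.
have [x0 dx0] := hRprop.2; have [r0 R0] := dom_fin hRprop dx0.
pose c0 := (2 * alpha)^-1 * `|g - A x0| ^+ 2 + r0.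
have tikh_x0 : tikh A Reg alpha g x0 = c0%:E by rewrite /tikh R0 EFinD.
have sub : [set u | (tikh A Reg alpha g (j u) <= c0%:E)%E] `<=`
           j @^-1` [set x | (Reg x <= c0%:E)%E].
  move=> u /=; apply: le_trans; rewrite /tikh leeDr // lee_fin.
  by rewrite mulr_ge0 ?sqr_ge0 // invr_ge0 mulr_ge0 // ltW.
have hK := subclosed_compact ((lsc_closed_sublevel _).1 (@tikh_lsc alpha g a0) c0)
  (@hRcomp c0) sub.
have [|p hp] := lsc_attains_min (@tikh_lsc alpha g a0) hK.
  by exists (jinv x0); rewrite /= Kj tikh_x0.
exists (j p); split => [|z _]; last by have := hp (jinv z); rewrite Kj.
have : (tikh A Reg alpha g (j p) < +oo)%E.
  by apply: le_lt_trans (hp (jinv x0)) _; rewrite Kj tikh_x0 ltry.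
rewrite /dom_fun /= /tikh; case: (Reg (j p)) => [r _| |]; first exact: ltry.
  by rewrite addey.
by move=> _; exact: ltNye.
Qed.

(* Key estimate for (i) => (ii): [|A x - A xa| - 2 alpha r <= gamma_x(r)].
   For [z] in [B_r] compare with the minimiser [zb] of [A z] for every
   parameter [beta], and let [beta] tend to [0]. *)
Lemma residual_le_gammax x alpha r xa : 0 < alpha -> 0 < r ->
  Ralpha A Reg alpha (A x) xa ->
  ((`|A x - A xa| - 2 * (alpha * r))%:E <= gammax A Reg x r)%E.
Proof.
move=> a0 r0 hxa; apply/ereal_infP => _ [z hz <-]; rewrite lee_fin.
apply/ler_addgt0Pr => e e0; rewrite lerBlDr.
have b0 : 0 < e / r by rewrite divr_gt0.
have [zb hzb] := tikh_minimizer_exists (A z) b0.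
have := residual_le_Bset hip hRprop hRconv a0 b0 (ltW r0) hxa hz hzb.
by rewrite divfK ?gt_eqF.
Qed.

End Existence.

Lemma balance (R : realType) (nu alpha r c : R) : 0 < nu -> 0 < alpha ->
  0 < r -> alpha * r `^ (1 + nu) = c ->
  c * r `^ (- nu) = alpha * r /\
  c `^ (1 / (1 + nu)) * alpha `^ (nu / (1 + nu)) = alpha * r.
Proof.
move=> n0 a0 r0 <-.
have n1 : 1 + nu != 0 by rewrite gt_eqF // addr_gt0.
have powRD_pos (x s t : R) : 0 < x -> x `^ (s + t) = x `^ s * x `^ t.
  by move=> x0; rewrite powRD // (gt_eqF x0) implybT.
split; first by rewrite -mulrA -powRD_pos // addrK powRr1 // ltW.
have inv1 : (1 + nu) * (1 / (1 + nu)) = 1 by rewrite div1r mulfV.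
rewrite powRM ?powR_ge0 ?ltW // -powRrM inv1 powRr1 ?ltW //.
have sum1 : 1 / (1 + nu) + nu / (1 + nu) = 1 by rewrite -mulrDl divff.
by rewrite mulrAC -powRD_pos // sum1 powRr1 // ltW.
Qed.

Unset Implicit Arguments. Set Strict Implicit.

Theorem proposition4p9
  (R : realType)
  (X : completeNormedModType R)               (* Banach space X *)
  (Xt : tvsType R)                            (* (X, tau): locally convex *)
  (j : {linear Xt -> X})                      (* identity (X,tau) -> X *)
  (Reg : X -> \bar R)
  (Y : completeNormedModType R) (ip : Y -> Y -> R)
  (A : {linear X -> Y})
  (hXt : hausdorff_space Xt) (hj : bijective j)
  (hip : is_inner_product ip)
  (hRprop : proper_fun Reg) (hRconv : convex_fun Reg)
  (hRcomp : forall c : R, compact (j @^-1` [set x | (Reg x <= c%:E)%E]))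
  (hAcont : forall y : Y, continuous (fun u : Xt => ip (A (j u)) y))
  (nu : R) (hnu : 0 < nu) (x : X) :
  let cond_i (c1 : R) := forall r : R, 0 < r ->
      (gammax A Reg x r <= (c1 * r `^ (- nu))%:E)%E in
  let cond_ii (c2 : R) := forall alpha : R, 0 < alpha ->
      forall xa : X, Ralpha A Reg alpha (A x) xa ->
      `|A x - A xa| <= c2 * alpha `^ (nu / (1 + nu)) in
  ((exists2 c1 : R, 0 < c1 & cond_i c1) <-> (exists2 c2 : R, 0 < c2 & cond_ii c2)) /\
  (forall c1 : R, 0 < c1 -> cond_i c1 -> cond_ii (4 * c1 `^ (1 / (1 + nu)))) /\
  (forall c2 : R, 0 < c2 -> cond_ii c2 -> cond_i (c2 `^ (1 + nu))).
Proof.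
move=> cond_i cond_ii.
have n1 : 1 + nu != 0 by rewrite gt_eqF // addr_gt0.
have inv1 : (1 + nu) * (1 / (1 + nu)) = 1 by rewrite div1r mulfV.
have i_ii c1 : 0 < c1 -> cond_i c1 -> cond_ii (4 * c1 `^ (1 / (1 + nu))).
  move=> c0 hi alpha a0 xa hxa; pose r := (c1 / alpha) `^ (1 / (1 + nu)).
  have r0 : 0 < r by rewrite powR_gt0 // divr_gt0.
  have hr : alpha * r `^ (1 + nu) = c1.
    by rewrite -powRrM (mulrC (1 / _)) inv1 powRr1 ?divr_ge0 ?ltW // mulrC divfK ?gt_eqF.
  have [e1 e2] := balance hnu a0 r0 hr.
  have := le_trans (residual_le_gammax hXt hj hip hRprop hRconv hRcomp hAcont a0 r0 hxa) (hi r r0).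
  rewrite e1 lee_fin -mulrA e2 => hres.
  by have ar : 0 < alpha * r := mulr_gt0 a0 r0; lra.
have ii_i c2 : 0 < c2 -> cond_ii c2 -> cond_i (c2 `^ (1 + nu)).
  move=> c0 hii r r0; pose alpha := c2 `^ (1 + nu) / r `^ (1 + nu).
  have a0 : 0 < alpha by rewrite divr_gt0 // powR_gt0.
  have [|e1 e2] := balance hnu a0 r0 (_ : _ = c2 `^ (1 + nu)).
    by rewrite /alpha divfK // gt_eqF // powR_gt0.
  rewrite -powRrM inv1 powRr1 ?ltW // in e2.
  have [xa hxa] := tikh_minimizer_exists hXt hj hip hRprop hRcomp hAcont (A x) a0.
  have hres := hii alpha a0 xa hxa; rewrite e2 in hres.
  rewrite e1; apply: le_trans (gammax_le_residual hip hRprop hRconv a0 hxa _) _.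
    by rewrite ler_pdivrMl.
  by rewrite lee_fin.
split; last by split.
split=> [[c1 c0 /(i_ii c1 c0) hii]|[c2 c0 /(ii_i c2 c0) hi]].
  by exists (4 * c1 `^ (1 / (1 + nu))); rewrite // mulr_gt0 // powR_gt0.
by exists (c2 `^ (1 + nu)); rewrite // powR_gt0.
Qed.
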